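(* Let $M=(\mathbf{K}^{\mathbf{n}},\rho)$ be a sum-matroid of rank $k=\rho(\mathbf{K}^{\mathbf{n}})$, let $M^*=(\mathbf{K}^{\mathbf{n}},\rho^* )$ be its dual, and let $n=n_1+\cdots+n_\ell$. Let $d_i=d^S_i(M)$ for $i=1,\dots,n-k$ and $d_j^\perp=d^S_j(M^* )$ for $j=1,\dots,k$. Then $$\{1,2,\dots,n\}=\{d_1^\perp,\dots,d_k^\perp\}\cup\{n+1-d_1,\dots,n+1-d_{n-k}\},$$ and the union is disjoint. In particular, the generalized weights of $M$ uniquely determine those of $M^*$.
   Context: $\ell,n_1,\dots,n_\ell$ positive integers, $K_1,\dots,K_\ell$ finite fields. $\mathcal{P}(\mathbf{K}^{\mathbf{n}})=\mathcal{P}(K_1^{n_1})\times\cdots\times\mathcal{P}(K_\ell^{n_\ell})$, $\mathcal{P}(K_i^{n_i})$ the lattice of $K_i$-subspaces of $K_i^{n_i}$, with componentwise inclusion, sum, intersection, and orthogonal complement $\mathcal{L}^\perp$ (w.r.t. the standard bilinear form on each $K_i^{n_i}$); $\mathrm{Rk}(\mathcal{L})=\sum_i\dim_{K_i}\mathcal{L}_i$; $\mathbf{K}^{\mathbf{n}}=(K_1^{n_1},\dots,K_\ell^{n_\ell})$. A sum-matroid is $(\mathbf{K}^{\mathbf{n}},\rho)$ with $\rho:\mathcal{P}(\mathbf{K}^{\mathbf{n}})\to\mathbb{Z}_{\ge0}$ satisfying (R1) $0\le\rho(\mathcal{L})\le\mathrm{Rk}(\mathcal{L})$; (R2) $\mathcal{L}\subseteq\mathcal{L}'\Rightarrow\rho(\mathcal{L})\le\rho(\mathcal{L}')$;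 (R3) $\rho(\mathcal{L}+\mathcal{L}')+\rho(\mathcal{L}\cap\mathcal{L}')\le\rho(\mathcal{L})+\rho(\mathcal{L}')$. The dual $M^*$ has rank function $\rho^*(\mathcal{L})=\rho(\mathcal{L}^\perp)+\mathrm{Rk}(\mathcal{L})-\rho(\mathbf{K}^{\mathbf{n}})$. For a sum-matroid with rank function $\rho$, nullity is $\eta(\mathcal{L})=\mathrm{Rk}(\mathcal{L})-\rho(\mathcal{L})$, and the $i$-th generalized weight is $d^S_i=\min\{\mathrm{Rk}(\mathcal{L}):\mathcal{L}\in\mathcal{P}(\mathbf{K}^{\mathbf{n}}),\ \eta(\mathcal{L})=i\}$ for $i=1,\dots,\eta(\mathbf{K}^{\mathbf{n}})$. *)

From HB Require Import structures.
From mathcomp Require Import all_boot all_algebra all_field.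
Set Implicit Arguments. Unset Strict Implicit. Unset Printing Implicit Defensive.
Import GRing.Theory.
Local Open Scope ring_scope.

(* An element of P(K^n) = P(K_1^{n_1}) x ... x P(K_l^{n_l}):
   a family of subspaces, the i-th one a K_i-subspace of K_i^{n_i}
   (vectors of K_i^{n_i} are row vectors 'rV[K i]_(n i)). *)
Definition subsp (l : nat) (K : 'I_l -> finFieldType) (n : 'I_l -> nat) :=
  forall i : 'I_l, {vspace 'rV[K i]_(n i)}.

Section SumMatroid.
Variables (l : nat) (K : 'I_l -> finFieldType) (n : 'I_l -> nat).
Local Notation L := (subsp K n).

Definition sfull : L := fun i => fullv.
Definition sadd (X Y : L) : L := fun i => (X i + Y i)%VS.
Definition scap (X Y : L) : L := fun i => (X i :&: Y i)%VS.
Definition ssub (X Y : L) : Prop := forall i, (X i <= Y i)%VS.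

Definition vperp (m : nat) (F : finFieldType) (U : {vspace 'rV[F]_m})
  : {vspace 'rV[F]_m} :=
  <<[seq v | v in [pred v : 'rV[F]_m |
        [forall u : 'rV[F]_m, (u \in U) ==> ((v *m u^T)%R ord0 ord0 == 0%R)]]]>>%VS.
Definition sperp (X : L) : L := fun i => vperp (X i).

Definition Rk (X : L) : nat := (\sum_(i < l) \dim (X i))%N.

Definition is_sum_matroid (rho : L -> nat) : Prop :=
  [/\ (forall X, rho X <= Rk X)%N,
      (forall X Y, ssub X Y -> rho X <= rho Y)%N &
      (forall X Y, rho (sadd X Y) + rho (scap X Y) <= rho X + rho Y)%N].

(* dual rank function: rho*(X) = rho(X^perp) + Rk(X) - rho(K^n)
   (never truncated for a sum-matroid) *)
Definition dual_rank (rho : L -> nat) (X : L) : nat :=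
  (rho (sperp X) + Rk X - rho sfull)%N.

Definition nullity (rho : L -> nat) (X : L) : nat := (Rk X - rho X)%N.

Definition is_gen_weight (rho : L -> nat) (i d : nat) : Prop :=
  (exists X, nullity rho X = i /\ Rk X = d) /\
  (forall X, nullity rho X = i -> (d <= Rk X)%N).

End SumMatroid.

(** Let F m be the largest nullity of an element of rank m.  Since ranks can be
    lowered or raised one dimension at a time and rho is 1-Lipschitz, F climbs from
    0 to n - k in unit steps, and d_i, the least rank carrying nullity i, is the
    point where F reaches level i: the d_i are exactly the jumps of F.  The same
    holds for the profile G of M^* and the dp_j.  Orthogonal complementation swaps
    ranks m and n - m and gives G m + n = F (n - m) + k + m, so G jumps at m iff F
    does not jump at n + 1 - m, which is the announced partition of {1, ..., n}. *)

From mathcomp Require Import all_boot all_algebra all_field.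
From mathcomp Require Import zify.
From Stdlib Require Import ClassicalEpsilon FunctionalExtensionality.
Set Implicit Arguments. Unset Strict Implicit. Unset Printing Implicit Defensive.
Import GRing.Theory.

Section OrthogonalComplement.
Local Open Scope ring_scope.
Variables (F : finFieldType) (m : nat).
Implicit Types (U : {vspace 'rV[F]_m}) (u v : 'rV[F]_m).

Definition dot_rV u v : F := (u *m v^T) ord0 ord0.

Lemma dot_rVE u v : dot_rV u v = \sum_j u ord0 j * v ord0 j.
Proof. by rewrite /dot_rV mxE; apply: eq_bigr => j _; rewrite mxE. Qed.

Lemma dot_rVC u v : dot_rV u v = dot_rV v u.
Proof. by rewrite !dot_rVE; apply: eq_bigr => j _; rewrite mulrC. Qed.

Lemma dot_rV_sumr u (I : finType) (c : I -> F) (b : I -> 'rV[F]_m) :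
  dot_rV u (\sum_i c i *: b i) = \sum_i c i * dot_rV u (b i).
Proof.
rewrite dot_rVE; under eq_bigr => j _ do rewrite summxE big_distrr /=.
rewrite exchange_big /=; apply: eq_bigr => i _.
by rewrite dot_rVE big_distrr /=; apply: eq_bigr => j _; rewrite mxE mulrCA.
Qed.

Definition vbasis_mx U : 'M[F]_(\dim U, m) := \matrix_(i, j) (vbasis U)`_i ord0 j.

Lemma mul_vbasis_mxE U v i : (v *m (vbasis_mx U)^T) ord0 i = dot_rV v (vbasis U)`_i.
Proof. by rewrite mxE dot_rVE; apply: eq_bigr => j _; rewrite !mxE. Qed.

Lemma mul_vbasis_mx_eq0 U v :
  (v *m (vbasis_mx U)^T == 0) = [forall u, (u \in U) ==> (dot_rV v u == 0)].
Proof.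
apply/eqP/forallP => [vB0 u|vU0].
  apply/implyP => /coord_vbasis ->; rewrite dot_rV_sumr big1 // => i _.
  by have /rowP/(_ i) := vB0; rewrite mul_vbasis_mxE mxE => ->; rewrite mulr0.
apply/rowP => i; rewrite mul_vbasis_mxE mxE; apply/eqP.
by have /implyP := vU0 (vbasis U)`_i; apply; rewrite vbasis_mem // mem_nth // size_tuple.
Qed.

Lemma vbasis_mx_free U : row_free (vbasis_mx U).
Proof.
apply: inj_row_free => x x0.
have : \sum_i x ord0 i *: (vbasis U)`_i = 0.
  rewrite -[RHS]x0 mulmx_sum_row; apply: eq_bigr => i _; congr (_ *: _).
  by apply/rowP => j; rewrite !mxE.
move/(freeP (basis_free (vbasisP U))) => xi0.
by apply/rowP => i; rewrite xi0 mxE.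
Qed.

Definition dot_vbasis U : 'Hom('rV[F]_m, 'rV[F]_(\dim U)) :=
  linfun (@mulmxr F 1 m (\dim U) (vbasis_mx U)^T).

Lemma dot_vbasisE U v : dot_vbasis U v = v *m (vbasis_mx U)^T.
Proof. by rewrite lfunE. Qed.

Lemma vperp_ker U : vperp U = lker (dot_vbasis U).
Proof.
apply/vspaceP => v; apply/idP/idP => [|vU0]; last first.
  by apply: memv_span; apply: image_f; rewrite inE -mul_vbasis_mx_eq0 -dot_vbasisE -memv_ker.
move: v; apply/subvP/span_subvP => v /imageP [w]; rewrite inE => + ->.
by rewrite memv_ker dot_vbasisE mul_vbasis_mx_eq0.
Qed.

Lemma memv_perp U v : (v \in vperp U) = [forall u, (u \in U) ==> (dot_rV v u == 0)].
Proof. by rewrite vperp_ker memv_ker dot_vbasisE mul_vbasis_mx_eq0. Qed.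

Lemma limg_dot_vbasis U : limg (dot_vbasis U) = fullv.
Proof.
apply/eqP; rewrite eqEsubv subvf /=; apply/subvP => w _.
have /row_fullP [C BC] : row_full (vbasis_mx U)^T.
  by rewrite /row_full mxrank_tr; exact: vbasis_mx_free.
by apply/memv_imgP; exists (w *m C); rewrite ?memvf // dot_vbasisE -mulmxA BC mulmx1.
Qed.

Lemma dimv_rV U : (\dim U <= m)%N.
Proof. by have := dimvS (subvf U); rewrite dimvf dim_matrix mul1r. Qed.

Lemma dim_vperp U : \dim (vperp U) = (m - \dim U)%N.
Proof.
have := limg_ker_dim (dot_vbasis U) fullv.
rewrite capfv limg_dot_vbasis !dimvf !dim_matrix -vperp_ker !mul1r => dimE.
by apply/eqP; rewrite -(eqn_add2r (\dim U)) subnK ?dimv_rV // dimE.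
Qed.

Lemma vperpK U : vperp (vperp U) = U.
Proof.
apply/eqP; rewrite eq_sym eqEdim !dim_vperp subKn ?dimv_rV // leqnn andbT.
apply/subvP => u uU; rewrite memv_perp; apply/forallP => v; apply/implyP.
by rewrite memv_perp dot_rVC => /forallP/(_ u)/implyP; apply.
Qed.

Lemma vperpS U V : (U <= V)%VS -> (vperp V <= vperp U)%VS.
Proof.
move=> /subvP UV; apply/subvP => v; rewrite !memv_perp => /forallP vV0.
by apply/forallP => u; apply/implyP => /UV; apply/implyP.
Qed.

End OrthogonalComplement.

Section UnitStep.
Variables (N : nat) (H : nat -> nat).

Definition unit_step := H 0 = 0 /\ forall m, m < N -> H m <= H m.+1 <= (H m).+1.

Definition first_hit i w := [/\ w <= N, i <= H w & forall m, m <= N -> i <= H m -> w <= m].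

Definition is_jump m := (0 < m <= N) && (H m == (H m.-1).+1).

Lemma is_jump_bounds m : is_jump m -> 0 < m <= N.
Proof. by case/andP. Qed.

Hypothesis H_step : unit_step.

Lemma unit_step_mono a b : a <= b <= N -> H a <= H b.
Proof.
case: H_step => _ Hs; elim: b => [|b IH]; first by rewrite leqn0 => /andP [/eqP ->].
rewrite leq_eqVlt => /andP [/orP [/eqP -> //| ab] bN].
have := Hs b bN; have := IH ltac:(lia); lia.
Qed.

Lemma first_hit_jump i w : 0 < i -> first_hit i w -> is_jump w /\ H w = i.
Proof.
case: H_step => H0 Hs i0 [wN iw wmin].
have w0 : 0 < w by case: w iw {wN wmin} => [|w] //; rewrite H0 leqNgt i0.
have : H w.-1 < i by rewrite ltnNge; apply/negP => /(wmin w.-1 ltac:(lia)); lia.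
have := Hs w.-1 ltac:(lia); rewrite prednK // /is_jump w0 wN /= => Hw Hwi.
suff Hwi' : H w = i by rewrite Hwi' eqn_leq; lia.
lia.
Qed.

Lemma jump_first_hit m : is_jump m -> first_hit (H m) m.
Proof.
move=> /andP [mN /eqP Hm]; split; [lia | done | move=> p pN Hp].
rewrite leqNgt; apply/negP => pm.
have := unit_step_mono (a := p) (b := m.-1) ltac:(lia); lia.
Qed.

Lemma first_hit_unique i w w' : first_hit i w -> first_hit i w' -> w = w'.
Proof.
by move=> [wN iw wmin] [w'N iw' w'min]; apply/anti_leq; rewrite wmin // w'min.
Qed.

Lemma jumpP (w : nat -> nat) : (forall i, 0 < i <= H N -> first_hit i (w i)) ->
  forall m, is_jump m <-> exists2 i, 0 < i <= H N & w i = m.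
Proof.
move=> w_hit m; split => [jm|[i iN <-]]; last by case: (first_hit_jump _ (w_hit i iN)); lia.
have [mN /eqP Hm] := andP jm.
have HmN : H m <= H N by apply: unit_step_mono; lia.
exists (H m); first lia.
by apply: first_hit_unique (w_hit (H m) _) (jump_first_hit jm); lia.
Qed.

End UnitStep.

(* G m - G m.-1 = 1 - (F (N.+1 - m) - F (N - m)). *)
Lemma jump_reflect N k F G m : unit_step N F ->
  (forall m, m <= N -> G m + N = F (N - m) + k + m) ->
  0 < m <= N -> is_jump N G m = ~~ is_jump N F (N.+1 - m).
Proof.
move=> [_ Fs] GF mN; rewrite /is_jump.
have := Fs (N - m) ltac:(lia); have := GF m ltac:(lia); have := GF m.-1 ltac:(lia).
have -> : (N.+1 - m).-1 = N - m by lia.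
have -> : N - m.-1 = N.+1 - m by lia.
have -> : (N - m).+1 = N.+1 - m by lia.
have -> : (0 < N.+1 - m <= N) = true by apply/andP; lia.
by rewrite mN; do 2 case: eqP; lia.
Qed.

Lemma complementary_jumps N k F G (d dp : nat -> nat) :
  unit_step N F -> unit_step N G -> F N = N - k ->
  (forall m, m <= N -> G m + N = F (N - m) + k + m) ->
  (forall i, 1 <= i <= N - k -> first_hit N F i (d i)) ->
  (forall j, 1 <= j <= k -> first_hit N G j (dp j)) ->
  (forall m, 1 <= m <= N <->
     ((exists2 j, 1 <= j <= k & dp j = m) \/
      (exists2 i, 1 <= i <= N - k & N + 1 - d i = m))) /\
  (forall i j, 1 <= i <= N - k -> 1 <= j <= k -> dp j <> N + 1 - d i).
Proof.
move=> Fs Gs FN GF d_hit dp_hit.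
have [G0 _] := Gs; have [F0 _] := Fs.
have kN : k <= N by have := GF 0 (leq0n N); rewrite subn0 FN G0; lia.
have GN : G N = k by have := GF N (leqnn N); rewrite subnn F0; lia.
have jumpF m : is_jump N F m <-> exists2 i, 1 <= i <= N - k & d i = m.
  by rewrite -FN; apply: jumpP => // i; rewrite FN; exact: d_hit.
have jumpG m : is_jump N G m <-> exists2 j, 1 <= j <= k & dp j = m.
  by rewrite -{1}GN; apply: jumpP => // j; rewrite GN; exact: dp_hit.
split=> [m|i j ik jk dpj].
  split=> [mN|[[j jk <-]|[i ik <-]]].
  - case jGm: (is_jump N G m); first by left; apply/jumpG.
    have /jumpF [i ik di] : is_jump N F (N.+1 - m).
      by apply/negbNE; rewrite -(jump_reflect Fs GF) ?jGm.
    by right; exists i; rewrite // di; lia.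
  - by apply: is_jump_bounds (G) _ _; apply/jumpG; exists j.
  - have /is_jump_bounds : is_jump N F (d i) by apply/jumpF; exists i.
    lia.
have jGdp : is_jump N G (dp j) by apply/jumpG; exists j.
have jFd : is_jump N F (d i) by apply/jumpF; exists i.
have dN := is_jump_bounds jFd.
move: (jGdp); rewrite (jump_reflect Fs GF (is_jump_bounds jGdp)) dpj.
by rewrite (_ : N.+1 - (N + 1 - d i) = d i) ?jFd //; lia.
Qed.

Section Hyperplane.
Variables (F : fieldType) (vT : vectType F).
Implicit Type U : {vspace vT}.

Definition vhyperplane U : {vspace vT} := <<behead (vbasis U)>>%VS.

Lemma vhyperplane_sub U : (vhyperplane U <= U)%VS.
Proof. by apply/span_subvP => v /mem_behead /vbasis_mem. Qed.

Lemma dim_vhyperplane U : \dim (vhyperplane U) = (\dim U).-1.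
Proof.
rewrite /vhyperplane; have := basis_free (vbasisP U); have := size_tuple (vbasis U).
case: (tval (vbasis U)) => [|v s] /= <-; first by rewrite span_nil dimv0.
by rewrite free_cons => /andP [_ /eqP ->].
Qed.

End Hyperplane.

Definition asbool (P : Prop) : bool := if excluded_middle_informative P then true else false.

Lemma asboolP (P : Prop) : reflect P (asbool P).
Proof. by rewrite /asbool; case: excluded_middle_informative => h; constructor. Qed.

Section SumMatroidLattice.
Variables (l : nat) (K : 'I_l -> finFieldType) (n : 'I_l -> nat).
Local Notation L := (subsp K n).
Local Notation N := (\sum_(i < l) n i)%N.
Implicit Types X Y Z : L.

Lemma subsp_ext X Y : (forall i, X i = Y i) -> X = Y.
Proof. exact: functional_extensionality_dep. Qed.

Lemma ssub_full X : ssub X (sfull K n).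
Proof. by move=> i; exact: subvf. Qed.

Lemma Rk_full : Rk (sfull K n) = N.
Proof. by apply: eq_bigr => i _; rewrite dimvf dim_matrix mul1r. Qed.

Lemma Rk_le X : (Rk X <= N)%N.
Proof. by apply: leq_sum => i _; exact: dimv_rV. Qed.

Lemma Rk_monotone X Y : ssub X Y -> (Rk X <= Rk Y)%N.
Proof. by move=> XY; apply: leq_sum => i _; apply: dimvS. Qed.

Lemma Rk_perp X : Rk (sperp X) = (N - Rk X)%N.
Proof.
suff : (Rk (sperp X) + Rk X = N)%N by lia.
rewrite /Rk -big_split /=; apply: eq_bigr => i _.
by rewrite /sperp dim_vperp subnK // dimv_rV.
Qed.

Lemma sperpK X : sperp (sperp X) = X.
Proof. by apply: subsp_ext => i; rewrite /sperp vperpK. Qed.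

Lemma sperpS X Y : ssub X Y -> ssub (sperp Y) (sperp X).
Proof. by move=> XY i; apply: vperpS. Qed.

Lemma ssub_Rk_pred X : (0 < Rk X)%N -> exists2 Y, ssub Y X & Rk Y = (Rk X).-1.
Proof.
have [i Xi0 _|X0] := pickP (fun i => 0 < \dim (X i))%N; last first.
  by rewrite /Rk big1 // => i _; have := X0 i; case: (\dim _).
exists (fun j => if j == i then vhyperplane (X j) else X j).
  by move=> j; case: eqP => _; [exact: vhyperplane_sub | exact: subvv].
rewrite /Rk (bigD1 i) //= [in RHS](bigD1 i) //= eqxx dim_vhyperplane.
under eq_bigr => j /negbTE -> do [].
by move: Xi0; case: (\dim (X i)).
Qed.

(* Raising the rank of X is lowering the rank of its orthogonal complement. *)
Lemma ssub_Rk_succ X : (Rk X < N)%N -> exists2 Y, ssub X Y & Rk Y = (Rk X).+1.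
Proof.
move=> XN; have [Z ZX RkZ] := ssub_Rk_pred (X := sperp X) ltac:(rewrite Rk_perp; lia).
exists (sperp Z); first by rewrite -{1}(sperpK X); apply: sperpS.
by rewrite Rk_perp RkZ Rk_perp; lia.
Qed.

Lemma exists_Rk m : (m <= N)%N -> exists X, Rk X = m.
Proof.
elim: m => [|m IH] mN; last first.
  have [X RkX] := IH (ltnW mN).
  by have [Y _ RkY] := ssub_Rk_succ (X := X) ltac:(lia); exists Y; rewrite RkY RkX.
by exists (fun i => 0%VS); rewrite /Rk big1 // => i _; exact: dimv0.
Qed.

Definition is_lipschitz_rank (r : L -> nat) :=
  [/\ forall X, (r X <= Rk X)%N,
      forall X Y, ssub X Y -> (r X <= r Y)%N &
      forall X Y, ssub X Y -> (r Y <= r X + (Rk Y - Rk X))%N].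

Section NullityProfile.
Variable r : L -> nat.
Hypothesis r_lip : is_lipschitz_rank r.

Definition max_nullity m :=
  (\max_(s < m.+1 | asbool (exists X, Rk X = m /\ nullity r X = s)) s)%N.

Lemma max_nullity_ub X : (nullity r X <= max_nullity (Rk X))%N.
Proof.
have s_lt : (nullity r X < (Rk X).+1)%N by rewrite ltnS leq_subr.
apply: (leq_bigmax_cond (Ordinal s_lt) (F := fun s : 'I__ => nat_of_ord s)).
by apply/asboolP; exists X.
Qed.

Lemma max_nullity_attained m : (m <= N)%N -> exists X, Rk X = m /\ nullity r X = max_nullity m.
Proof.
move=> /exists_Rk [X RkX].
have s_lt : (nullity r X < m.+1)%N by rewrite -RkX ltnS leq_subr.
rewrite /max_nullity (bigmax_eq_arg (Ordinal s_lt)); last by apply/asboolP; exists X.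
by case: arg_maxnP => [|s /asboolP [Y YRk _]]; [apply/asboolP; exists X | exists Y].
Qed.

Lemma max_nullity0 : max_nullity 0 = 0%N.
Proof. by apply/eqP; rewrite -leqn0; apply/bigmax_leqP => s _; rewrite -ltnS. Qed.

Lemma max_nullity_full : max_nullity N = (N - r (sfull K n))%N.
Proof.
case: r_lip => _ r_mono r_lip1.
have [X [RkX <-]] := max_nullity_attained (leqnn N).
suff rX : r X = r (sfull K n) by rewrite /nullity RkX rX.
apply/anti_leq; rewrite (r_mono _ _ (ssub_full X)) /=.
by have := r_lip1 _ _ (ssub_full X); rewrite Rk_full RkX subnn addn0.
Qed.

Lemma max_nullity_unit_step : unit_step N max_nullity.
Proof.
case: r_lip => r_le r_mono r_lip1; split=> [|m mN]; first exact: max_nullity0.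
apply/andP; split.
  have [X [RkX <-]] := max_nullity_attained (ltnW mN).
  have [Y XY RkY] := ssub_Rk_succ (X := X) ltac:(lia).
  have := max_nullity_ub Y; have := r_lip1 _ _ XY; have := r_le X.
  rewrite /nullity RkY RkX; lia.
have [Y [RkY <-]] := max_nullity_attained mN.
have [X XY RkX] := ssub_Rk_pred (X := Y) ltac:(lia).
have := max_nullity_ub X; have := r_mono _ _ XY; have := r_le Y.
rewrite /nullity RkX RkY /=; lia.
Qed.

Lemma nullity_intermediate X i : (i <= nullity r X)%N ->
  exists Y, (Rk Y <= Rk X)%N /\ nullity r Y = i.
Proof.
case: r_lip => r_le r_mono _.
elim: {X}(Rk X) {-2}X (erefl (Rk X)) => [|t IH] X RkX iX.
  by exists X; split=> //; move: iX; rewrite /nullity RkX; lia.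
have [<-|iX'] := eqVneq (nullity r X) i; first by exists X.
have [Y YX RkY] := ssub_Rk_pred (X := X) ltac:(lia).
have iY : (i <= nullity r Y)%N.
  by have := r_mono _ _ YX; move: iX iX'; rewrite /nullity RkY; lia.
by have [Z [RkZ <-]] := IH Y ltac:(lia) iY; exists Z; split=> //; lia.
Qed.

Lemma gen_weight_first_hit i d : is_gen_weight r i d -> first_hit N max_nullity i d.
Proof.
move=> [[X [Xi RkX]] d_min].
split; [by rewrite -RkX Rk_le | by rewrite -RkX -Xi max_nullity_ub |].
move=> m mN im; have [Y [RkY Ym]] := max_nullity_attained mN.
have [Z [RkZ Zi]] := nullity_intermediate (X := Y) (i := i) ltac:(lia).
by have := d_min Z Zi; lia.
Qed.

End NullityProfile.

Section SumMatroid.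
Variable rho : L -> nat.
Hypothesis rho_matroid : is_sum_matroid rho.
Local Notation k := (rho (sfull K n)).

Lemma sum_matroid_lipschitz : is_lipschitz_rank rho.
Proof.
case: rho_matroid => R1 R2 R3; split=> // X Y XY.
pose C : L := fun i => (Y i :\: X i)%VS.
have XC_Y i : (X i + C i)%VS = Y i by rewrite addvC addv_diff; apply/addv_idPl.
have -> : Y = sadd X C by apply: subsp_ext => i; rewrite /sadd XC_Y.
have -> : Rk (sadd X C) = (Rk X + Rk C)%N.
  rewrite /Rk -big_split; apply: eq_bigr => i _ /=.
  by rewrite -dimv_disjoint_sum // capvC capv_diff.
by have := R3 X C; have := R1 C; lia.
Qed.

Lemma rho_le_full X : (rho X <= k)%N.
Proof. by case: rho_matroid => _ R2 _; apply: R2; exact: ssub_full. Qed.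

Lemma rho_full_le_perp X : (k <= rho (sperp X) + Rk X)%N.
Proof.
case: sum_matroid_lipschitz => _ _ lip.
by have := lip _ _ (ssub_full (sperp X)); rewrite Rk_full Rk_perp; have := Rk_le X; lia.
Qed.

Lemma dual_rank_lipschitz : is_lipschitz_rank (dual_rank rho).
Proof.
case: sum_matroid_lipschitz => _ mono lip; rewrite /dual_rank.
split=> [X|X Y XY|X Y XY]; first by have := rho_le_full (sperp X); lia.
  have := lip _ _ (sperpS XY); rewrite !Rk_perp.
  have := Rk_monotone XY; have := Rk_le Y; have := rho_full_le_perp X; lia.
have := mono _ _ (sperpS XY); have := Rk_monotone XY.
have := rho_full_le_perp X; have := rho_full_le_perp Y; lia.
Qed.

Lemma nullity_dual_rank X :
  (nullity (dual_rank rho) X + N = nullity rho (sperp X) + k + Rk X)%N.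
Proof.
case: sum_matroid_lipschitz => le _ _.
have := le (sperp X); have := rho_full_le_perp X; have := rho_le_full (sperp X).
rewrite /nullity /dual_rank Rk_perp; have := Rk_le X; lia.
Qed.

Lemma max_nullity_dual m : (m <= N)%N ->
  (max_nullity (dual_rank rho) m + N = max_nullity rho (N - m) + k + m)%N.
Proof.
move=> mN; apply/anti_leq/andP; split.
  have [X [RkX <-]] := max_nullity_attained (dual_rank rho) mN.
  by have := max_nullity_ub rho (sperp X); rewrite nullity_dual_rank Rk_perp RkX; lia.
have [X [RkX <-]] := max_nullity_attained rho (leq_subr m N).
have := max_nullity_ub (dual_rank rho) (sperp X); have := nullity_dual_rank (sperp X).
by rewrite sperpK Rk_perp RkX subKn //; lia.
Qed.

End SumMatroid.
End SumMatroidLattice.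

Theorem mainTheorem10 (l : nat) (K : 'I_l -> finFieldType) (n : 'I_l -> nat)
  (rho : subsp K n -> nat) (d dp : nat -> nat) :
  (0 < l)%N -> (forall i, 0 < n i)%N ->
  is_sum_matroid rho ->
  let k := rho (sfull K n) in
  let N := (\sum_(i < l) n i)%N in
  (forall i, (1 <= i <= N - k)%N -> is_gen_weight rho i (d i)) ->
  (forall j, (1 <= j <= k)%N -> is_gen_weight (dual_rank rho) j (dp j)) ->
  (forall m : nat, (1 <= m <= N)%N <->
     ((exists2 j, (1 <= j <= k)%N & dp j = m) \/
      (exists2 i, (1 <= i <= N - k)%N & (N + 1 - d i)%N = m))) /\
  (forall i j, (1 <= i <= N - k)%N -> (1 <= j <= k)%N -> dp j <> (N + 1 - d i)%N).
Proof.
move=> _ _ rho_matroid k N d_weight dp_weight.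
have rho_lip := sum_matroid_lipschitz rho_matroid.
have dual_lip := dual_rank_lipschitz rho_matroid.
apply: (complementary_jumps (max_nullity_unit_step rho_lip) (max_nullity_unit_step dual_lip)).
- exact: max_nullity_full.
- exact: max_nullity_dual.
- by move=> i /d_weight; apply: gen_weight_first_hit.
- by move=> j /dp_weight; apply: gen_weight_first_hit.
Qed.
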